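(* Let $k\ge 0$. For all finite structures $\mathcal A_1,\mathcal A_2,\mathcal B_1,\mathcal B_2$ over the same vocabulary, if $\mathrm{Th}^k_{\mathrm{inv}(\mathrm{FO}+<)}(\mathcal A_1)=\mathrm{Th}^k_{\mathrm{inv}(\mathrm{FO}+<)}(\mathcal A_2)$ and $\mathrm{Th}^k_{\mathrm{inv}(\mathrm{FO}+<)}(\mathcal B_1)=\mathrm{Th}^k_{\mathrm{inv}(\mathrm{FO}+<)}(\mathcal B_2)$, then $\mathrm{Th}^k_{\mathrm{inv}(\mathrm{FO}+<)}(\mathcal A_1\sqcup\mathcal B_1)=\mathrm{Th}^k_{\mathrm{inv}(\mathrm{FO}+<)}(\mathcal A_2\sqcup\mathcal B_2)$ and $\mathrm{Th}^k_{\mathrm{inv}(\mathrm{FO}+<)}(\mathcal A_1\times\mathcal B_1)=\mathrm{Th}^k_{\mathrm{inv}(\mathrm{FO}+<)}(\mathcal A_2\times\mathcal B_2)$. That is, the rank-$k$ $<$-invariant FO theories of $\mathcal A\sqcup\mathcal B$ and of $\mathcal A\times\mathcal B$ are uniquely determined by those of $\mathcal A$ and $\mathcal B$.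
   Context: All structures are finite. An FO sentence $\varphi$ over a vocabulary $\tau$ extended with a fresh binary symbol $<$ is $<$-invariant if for every finite $\tau$-structure $\mathcal M$ and any two linear orders $<_1,<_2$ on $\mathrm{dom}(\mathcal M)$, $(\mathcal M,<_1)\models\varphi$ iff $(\mathcal M,<_2)\models\varphi$; then $\varphi$ is true in $\mathcal M$ if $(\mathcal M,<)\models\varphi$ for some (equivalently every) linear order. $\mathrm{Th}^k_{\mathrm{inv}(\mathrm{FO}+<)}(\mathcal M)$ is the set of all $<$-invariant FO sentences of quantifier rank at most $k$ true in $\mathcal M$. $\mathcal A\times\mathcal B$ is the direct product (domain $\mathrm{dom}(\mathcal A)\times\mathrm{dom}(\mathcal B)$, each relation holding of a tuple of pairs iff it holds componentwise in $\mathcal A$ and in $\mathcal B$). $\mathcal A\sqcup\mathcal B$ is the disjoint union, with the vocabulary augmented by two unary predicates naming the universes of $\mathcal A$ and of $\mathcal B$. *)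

From HB Require Import structures.
From mathcomp Require Import all_boot.
Set Warnings "-notation-overridden".
Set Implicit Arguments.
Unset Strict Implicit.
Unset Printing Implicit Defensive.

Record vocab := Vocab { vsym : finType; varity : vsym -> nat }.

Record struc (V : vocab) := Struc {
  dom : finType;
  dom_pt : dom;
  interp : forall s : vsym V, {ffun 'I_(varity s) -> dom} -> bool
}.
Arguments interp {V} s0 s : rename.
Arguments dom {V} s : rename.
Arguments dom_pt {V} s : rename.

(* FO formulas over V extended with a fresh binary symbol <  (FLt).
   Formulas are well-scoped de Bruijn: [form V n] has free variables in 'I_n. *)
Inductive form (V : vocab) : nat -> Type :=
| FFalse n : form V n
| FEq n (i j : 'I_n) : form V n
| FLt n (i j : 'I_n) : form V n
| FRel n (s : vsym V) (args : 'I_(varity s) -> 'I_n) : form V n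
| FNot n (f : form V n) : form V n
| FOr n (f g : form V n) : form V n
| FAnd n (f g : form V n) : form V n
| FEx n (f : form V n.+1) : form V n
| FAll n (f : form V n.+1) : form V n.

Arguments FFalse {V n}.

Fixpoint qrank V n (f : form V n) : nat :=
  match f with
  | FFalse _ | FEq _ _ _ | FLt _ _ _ | FRel _ _ _ => 0
  | FNot _ g => qrank g
  | FOr _ g h | FAnd _ g h => maxn (qrank g) (qrank h)
  | FEx _ g | FAll _ g => (qrank g).+1
  end.

Definition ext_env (T : Type) n (e : 'I_n -> T) (a : T) : 'I_n.+1 -> T :=
  fun i => match unlift ord0 i with Some j => e j | None => a end.

Fixpoint sat V (M : struc V) (lt : rel (dom M)) n (f : form V n)
    : ('I_n -> dom M) -> Prop :=
  match f in form _ n return ('I_n -> dom M) -> Prop with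
  | FFalse _ => fun _ => False
  | FEq _ i j => fun e => e i = e j
  | FLt _ i j => fun e => lt (e i) (e j)
  | FRel _ s args => fun e => interp M s [ffun k => e (args k)]
  | FNot _ g => fun e => ~ @sat V M lt _ g e
  | FOr _ g h => fun e => @sat V M lt _ g e \/ @sat V M lt _ h e
  | FAnd _ g h => fun e => @sat V M lt _ g e /\ @sat V M lt _ h e
  | FEx _ g => fun e => exists a, @sat V M lt _ g (ext_env e a)
  | FAll _ g => fun e => forall a, @sat V M lt _ g (ext_env e a)
  end.

Definition env0 (T : Type) (x : T) : 'I_0 -> T := fun _ => x.

Definition sentence V := form V 0.

Definition sat_sent V (M : struc V) (lt : rel (dom M)) (phi : sentence V) : Prop :=
  @sat V M lt 0 phi (env0 (dom_pt M)).

Definition linear_order (T : Type) (lt : rel T) : Prop :=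
  [/\ (forall x, ~~ lt x x),
      (forall x y z, lt x y -> lt y z -> lt x z) &
      (forall x y, x <> y -> lt x y \/ lt y x)].

Definition lt_invariant V (phi : sentence V) : Prop :=
  forall (M : struc V) (lt1 lt2 : rel (dom M)),
    linear_order lt1 -> linear_order lt2 ->
    (sat_sent lt1 phi <-> sat_sent lt2 phi).

(* truth of an invariant sentence: true under some (equivalently every) order *)
Definition inv_true V (M : struc V) (phi : sentence V) : Prop :=
  exists lt : rel (dom M), linear_order lt /\ sat_sent lt phi.

Definition Th_inv V (k : nat) (M : struc V) : sentence V -> Prop :=
  fun phi => [/\ qrank phi <= k, lt_invariant phi & inv_true M phi].

Definition same_Th V (k : nat) (M N : struc V) : Prop :=
  forall phi : sentence V, Th_inv k M phi <-> Th_inv k N phi.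

Definition prod_struc V (A B : struc V) : struc V :=
  @Struc V (dom A * dom B)%type (dom_pt A, dom_pt B)
    (fun s t => interp A s [ffun i => (t i).1] && interp B s [ffun i => (t i).2]).

(* vocabulary of a disjoint union: V plus two unary predicates
   (inr true names the universe of A, inr false the universe of B) *)
Definition union_vocab (V : vocab) : vocab :=
  @Vocab (vsym V + bool)%type
    (fun s => match s with inl s0 => varity s0 | inr _ => 1 end).

Definition union_interp V (A B : struc V) (s : vsym (union_vocab V))
    : {ffun 'I_(varity s) -> (dom A + dom B)%type} -> bool :=
  match s as s' return {ffun 'I_(@varity (union_vocab V) s') -> (dom A + dom B)%type} -> bool with
  | inl s0 => fun t =>
      [exists u : {ffun 'I_(varity s0) -> dom A},
          (t == [ffun i => inl (u i)]) && interp A s0 u]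
   || [exists u : {ffun 'I_(varity s0) -> dom B},
          (t == [ffun i => inr (u i)]) && interp B s0 u]
  | inr true => fun t =>
      [exists u : {ffun 'I_1 -> dom A}, t == [ffun i => inl (u i)]]
  | inr false => fun t =>
      [exists u : {ffun 'I_1 -> dom B}, t == [ffun i => inr (u i)]]
  end.

Definition dunion_struc V (A B : struc V) : struc (union_vocab V) :=
  @Struc (union_vocab V) (dom A + dom B)%type (inl (dom_pt A)) (@union_interp V A B).

From mathcomp Require Import all_boot.
Set Warnings "-notation-overridden".
Set Implicit Arguments.
Unset Strict Implicit.
Unset Printing Implicit Defensive.

(* Change one factor at a time: fix B and let M vary.  Every element of M + B or M * B is
   [g p x] for a tag [p] from a finite set depending only on B and an element [x] of M.
   Ordering M + B as "M first, then B" and M * B lexicographically, a sentence about the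
   compound structure translates into one about (M, <) with the same truth value and no
   larger quantifier rank: a quantifier becomes a quantifier over M followed by a finite
   disjunction (conjunction) over the tags, and atoms become atoms of M or Boolean
   constants.  As the translation depends only on B, it maps <-invariant sentences to
   <-invariant sentences, and equal rank-k invariant theories of M1 and M2 give equal
   ones for the compound structures. *)

Definition fbool V m (b : bool) : form V m := if b then FNot FFalse else FFalse.
Arguments fbool {V m}.

Lemma sat_fbool V (M : struc V) (lt : rel (dom M)) m (b : bool) (e : 'I_m -> dom M) :
  sat lt (fbool b) e <-> b.
Proof. by rewrite /fbool; case: b => /=; split => // _ []. Qed.

Lemma qrank_fbool V m (b : bool) : qrank (@fbool V m b) = 0.
Proof. by rewrite /fbool; case: b. Qed.

Definition bigor V m (P : finType) (h : P -> form V m) : form V m :=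
  foldr (fun p => FOr (h p)) FFalse (enum P).

Definition bigand V m (P : finType) (h : P -> form V m) : form V m :=
  foldr (fun p => FAnd (h p)) (fbool true) (enum P).

Section BigConnectives.
Variables (V : vocab) (M : struc V) (lt : rel (dom M)) (m : nat) (P : finType).
Variables (h : P -> form V m) (e : 'I_m -> dom M).

Lemma sat_foldr_or (s : seq P) :
  sat lt (foldr (fun p => FOr (h p)) FFalse s) e <-> exists2 p, p \in s & sat lt (h p) e.
Proof.
elim: s => [|p s IH] /=; first by split=> // -[].
split=> [[Hp | /IH [q qs Hq]] | [q]]; first by exists p; rewrite ?mem_head.
- by exists q; rewrite // in_cons qs orbT.
- rewrite in_cons => /orP [/eqP -> | qs] Hq; [by left | by right; apply/IH; exists q].
Qed.

Lemma sat_foldr_and (s : seq P) :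
  sat lt (foldr (fun p => FAnd (h p)) (fbool true) s) e <->
  forall p, p \in s -> sat lt (h p) e.
Proof.
elim: s => [|p s IH] /=; first by split=> // _ [].
split=> [[Hp /IH Hs] q | Hs].
- by rewrite in_cons => /orP [/eqP -> | /Hs].
- split; first by apply: Hs; rewrite mem_head.
  by apply/IH => q qs; apply: Hs; rewrite in_cons qs orbT.
Qed.

Lemma sat_bigor : sat lt (bigor h) e <-> exists p, sat lt (h p) e.
Proof.
split=> [/sat_foldr_or [p _ Hp] | [p Hp]]; first by exists p.
by apply/sat_foldr_or; exists p; rewrite ?mem_enum.
Qed.

Lemma sat_bigand : sat lt (bigand h) e <-> forall p, sat lt (h p) e.
Proof.
split=> [/sat_foldr_and Hs p | Hs]; first by apply: Hs; rewrite mem_enum.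
by apply/sat_foldr_and => p _.
Qed.

End BigConnectives.

Lemma qrank_bigor V m (P : finType) (h : P -> form V m) r :
  (forall p, qrank (h p) <= r) -> qrank (bigor h) <= r.
Proof. by move=> hr; rewrite /bigor; elim: (enum P) => //= p s IH; rewrite geq_max hr. Qed.

Lemma qrank_bigand V m (P : finType) (h : P -> form V m) r :
  (forall p, qrank (h p) <= r) -> qrank (bigand h) <= r.
Proof.
by move=> hr; rewrite /bigand; elim: (enum P) => [|p s IH] /=; rewrite ?qrank_fbool ?geq_max ?hr.
Qed.

Lemma ext_env_eq (T : Type) n (e1 e2 : 'I_n -> T) a :
  e1 =1 e2 -> ext_env e1 a =1 ext_env e2 a.
Proof. by move=> e12 i; rewrite /ext_env; case: unlift. Qed.

Lemma sat_ext V (M : struc V) (lt : rel (dom M)) n (f : form V n) (e1 e2 : 'I_n -> dom M) :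
  e1 =1 e2 -> sat lt f e1 <-> sat lt f e2.
Proof.
elim: f e1 e2 => {n} [n|n i j|n i j|n s args|n f IH|n f IH g IHg|n f IH g IHg|n f IH|n f IH]
  e1 e2 e12 /=.
- by [].
- by rewrite !e12.
- by rewrite !e12.
- by under eq_ffun do rewrite e12.
- by have := IH _ _ e12; tauto.
- by have := IH _ _ e12; have := IHg _ _ e12; tauto.
- by have := IH _ _ e12; have := IHg _ _ e12; tauto.
- have IHa a := IH _ _ (ext_env_eq a e12).
  by split=> -[a /IHa]; exists a.
- have IHa a := IH _ _ (ext_env_eq a e12).
  by split=> Ha a; apply/IHa.
Qed.

Definition ext_tags (P : Type) n m (s : 'I_n -> P * 'I_m) (p : P) : 'I_n.+1 -> P * 'I_m.+1 :=
  ext_env (fun i => ((s i).1, lift ord0 (s i).2)) (p, ord0).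

Lemma ext_env_ext_tags (P T U : Type) (g : P -> T -> U) n m (s : 'I_n -> P * 'I_m)
    (e : 'I_m -> T) p y :
  (fun i => g (ext_tags s p i).1 (ext_env e y (ext_tags s p i).2))
  =1 ext_env (fun i => g (s i).1 (e (s i).2)) (g p y).
Proof.
move=> i; rewrite /ext_tags /ext_env; case: (unliftP ord0 i) => [j _|_] /=.
- by rewrite liftK.
- by rewrite unlift_none.
Qed.

Lemma same_Th_sym V k (M N : struc V) : same_Th k M N -> same_Th k N M.
Proof. by move=> MN phi; apply: iff_sym. Qed.

Lemma same_Th_trans V k (M1 M2 M3 : struc V) :
  same_Th k M1 M2 -> same_Th k M2 M3 -> same_Th k M1 M3.
Proof. by move=> M12 M23 phi; apply: iff_trans (M12 phi) (M23 phi). Qed.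

Definition enum_lt (T : finType) : rel T := fun x y => enum_rank x < enum_rank y.

Lemma enum_lt_linear (T : finType) : linear_order (@enum_lt T).
Proof.
rewrite /enum_lt; split=> [x | x y z | x y xy]; first by rewrite ltnn.
- exact: ltn_trans.
- case: (ltngtP (enum_rank x) (enum_rank y)); [by left | by right |].
  by move/val_inj/enum_rank_inj.
Qed.

Section Translation.
Variables (V W : vocab) (P : finType).
Variables (tE tL : forall m, P -> P -> 'I_m -> 'I_m -> form V m).
Variable tR : forall m (s : vsym W), ('I_(varity s) -> P * 'I_m) -> form V m.

(* In [translate f s], the variable [i] of [f] stands for the element [g (s i).1 x] of the
   compound structure, where [x] is the value of the variable [(s i).2] of the translation
   (see [sat_translate]). *)
Fixpoint translate n (f : form W n) : forall m, ('I_n -> P * 'I_m) -> form V m :=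
  match f in form _ n return forall m, ('I_n -> P * 'I_m) -> form V m with
  | FFalse _ => fun m _ => FFalse
  | FEq _ i j => fun m s => tE (s i).1 (s j).1 (s i).2 (s j).2
  | FLt _ i j => fun m s => tL (s i).1 (s j).1 (s i).2 (s j).2
  | FRel _ r args => fun m s => tR (fun k => s (args k))
  | FNot _ g => fun m s => FNot (translate g s)
  | FOr _ g h => fun m s => FOr (translate g s) (translate h s)
  | FAnd _ g h => fun m s => FAnd (translate g s) (translate h s)
  | FEx _ g => fun m s =>
      FEx (bigor (fun p => translate g (ext_tags s p)))
  | FAll _ g => fun m s =>
      FAll (bigand (fun p => translate g (ext_tags s p)))
  end.

Lemma qrank_translate :
  (forall m p q (i j : 'I_m), qrank (tE p q i j) = 0) ->
  (forall m p q (i j : 'I_m), qrank (tL p q i j) = 0) ->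
  (forall m (s : vsym W) (t : 'I_(varity s) -> P * 'I_m), qrank (tR t) = 0) ->
  forall n (f : form W n) m (s : 'I_n -> P * 'I_m), qrank (translate f s) <= qrank f.
Proof.
move=> rE rL rR n f.
elim: f => {n} [n|n i j|n i j|n r args|n f IH|n f IH h IHh|n f IH h IHh|n f IH|n f IH] m s /=;
  rewrite ?rE ?rL ?rR //.
- by rewrite geq_max !leq_max IH IHh orbT.
- by rewrite geq_max !leq_max IH IHh orbT.
- by rewrite ltnS; apply: qrank_bigor => p; apply: IH.
- by rewrite ltnS; apply: qrank_bigand => p; apply: IH.
Qed.

Section Soundness.
Variables (M : struc V) (C : struc W) (lt : rel (dom M)) (ltC : rel (dom C)).
Variable g : P -> dom M -> dom C.
Hypothesis g_surj : forall c, exists p x, g p x = c.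
Hypothesis sat_tE : forall m p q (i j : 'I_m) e, sat lt (tE p q i j) e <-> g p (e i) = g q (e j).
Hypothesis sat_tL :
  forall m p q (i j : 'I_m) e, sat lt (tL p q i j) e <-> ltC (g p (e i)) (g q (e j)).
Hypothesis sat_tR : forall m (s : vsym W) (t : 'I_(varity s) -> P * 'I_m) e,
  sat lt (tR t) e <-> interp C s [ffun k => g (t k).1 (e (t k).2)].

Lemma sat_translate n (f : form W n) m (s : 'I_n -> P * 'I_m) e :
  sat lt (translate f s) e <-> sat ltC f (fun i => g (s i).1 (e (s i).2)).
Proof.
elim: f m s e => {n} [n|n i j|n i j|n r args|n f IH|n f IH h IHh|n f IH h IHh|n f IH|n f IH]
  m s e /=.
- by [].
- exact: sat_tE.
- exact: sat_tL.
- exact: sat_tR.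
- by have := IH m s e; tauto.
- by have := IH m s e; have := IHh m s e; tauto.
- by have := IH m s e; have := IHh m s e; tauto.
- have step p y := sat_ext ltC f (ext_env_ext_tags g s e p y).
  split=> [[y /sat_bigor [p /IH /step]] | [c]]; first by exists (g p y).
  have [p [y <-]] := g_surj c => /step /IH Hf.
  by exists y; apply/sat_bigor; exists p.
- have step p y := sat_ext ltC f (ext_env_ext_tags g s e p y).
  split=> [Hf c | Hf y].
    have [p [y <-]] := g_surj c.
    by have /sat_bigand /(_ p) /IH /step := Hf y.
  by apply/sat_bigand => p; apply/IH/step.
Qed.

End Soundness.

Section Transfer.
Variables (p0 : P) (F : struc V -> struc W).
Variable g : forall M, P -> dom M -> dom (F M).
Variable L : forall M, rel (dom M) -> rel (dom (F M)).
Hypothesis g_surj : forall M (c : dom (F M)), exists p (x : dom M), g p x = c.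
Hypothesis L_linear : forall M (lt : rel (dom M)), linear_order lt -> linear_order (L lt).
Hypothesis sat_tE : forall M (lt : rel (dom M)) m p q (i j : 'I_m) e,
  sat lt (tE p q i j) e <-> g p (e i) = g q (e j).
Hypothesis sat_tL : forall M (lt : rel (dom M)) m p q (i j : 'I_m) e,
  sat lt (tL p q i j) e <-> L lt (g p (e i)) (g q (e j)).
Hypothesis sat_tR : forall M (lt : rel (dom M)) m (s : vsym W) (t : 'I_(varity s) -> P * 'I_m) e,
  sat lt (tR t) e <-> interp (F M) s [ffun k => g (t k).1 (e (t k).2)].
Hypothesis qrank_tE : forall m p q (i j : 'I_m), qrank (tE p q i j) = 0.
Hypothesis qrank_tL : forall m p q (i j : 'I_m), qrank (tL p q i j) = 0.
Hypothesis qrank_tR : forall m (s : vsym W) (t : 'I_(varity s) -> P * 'I_m), qrank (tR t) = 0.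

Definition translate_sentence (phi : sentence W) : sentence V := translate phi (fun i => (p0, i)).

Lemma sat_translate_sentence M (lt : rel (dom M)) phi :
  sat_sent lt (translate_sentence phi) <-> sat_sent (L lt) phi.
Proof.
rewrite /sat_sent /translate_sentence.
apply: iff_trans (sat_translate (@g_surj M) (sat_tE lt) (sat_tL lt) (sat_tR lt) _ _ _) _.
by apply: sat_ext => -[].
Qed.

Lemma Th_inv_translate k M phi :
  Th_inv k (F M) phi -> Th_inv k M (translate_sentence phi).
Proof.
move=> [phi_k phi_inv [lt [lt_lin phi_lt]]]; split.
- exact: leq_trans (qrank_translate qrank_tE qrank_tL qrank_tR _ _) phi_k.
- move=> N lt1 lt2 lin1 lin2.
  apply: iff_trans (sat_translate_sentence _ _) _.
  apply: iff_trans _ (iff_sym (sat_translate_sentence _ _)).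
  exact: phi_inv _ _ _ (L_linear lin1) (L_linear lin2).
- exists (@enum_lt (dom M)); split; first exact: enum_lt_linear.
  apply/sat_translate_sentence/(phi_inv _ _ _ (L_linear (enum_lt_linear _)) lt_lin).
  exact: phi_lt.
Qed.

Lemma Th_inv_transfer k M1 M2 phi : same_Th k M1 M2 ->
  Th_inv k (F M1) phi -> Th_inv k (F M2) phi.
Proof.
move=> M12 phi1; have [phi_k phi_inv _] := phi1.
have [_ _ [lt [lt_lin /sat_translate_sentence phi_lt]]] := (M12 _).1 (Th_inv_translate phi1).
by split=> //; exists (L lt); split; first exact: L_linear.
Qed.

Lemma same_Th_transfer k M1 M2 : same_Th k M1 M2 -> same_Th k (F M1) (F M2).
Proof.
move=> M12 phi; split; first exact: Th_inv_transfer.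
by apply: Th_inv_transfer; apply: same_Th_sym.
Qed.

End Transfer.
End Translation.

Definition sum_lt (A B : Type) (ltA : rel A) (ltB : rel B) : rel (A + B) :=
  fun x y => match x, y with
  | inl a, inl a' => ltA a a'
  | inl _, inr _ => true
  | inr _, inl _ => false
  | inr b, inr b' => ltB b b'
  end.

Lemma sum_lt_linear A B (ltA : rel A) (ltB : rel B) :
  linear_order ltA -> linear_order ltB -> linear_order (sum_lt ltA ltB).
Proof.
move=> [irrA transA totA] [irrB transB totB]; split.
- by case.
- by move=> [x|x] [y|y] [z|z] //=; [apply: transA | apply: transB].
- move=> [x|x] [y|y] //= xy; [apply: totA | by left | by right | apply: totB];
  by move=> exy; apply: xy; rewrite exy.
Qed.

Definition lex_lt (A B : eqType) (ltA : rel A) (ltB : rel B) : rel (A * B) :=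
  fun x y => ltA x.1 y.1 || (x.1 == y.1) && ltB x.2 y.2.

Lemma lex_lt_linear (A B : eqType) (ltA : rel A) (ltB : rel B) :
  linear_order ltA -> linear_order ltB -> linear_order (lex_lt ltA ltB).
Proof.
move=> [irrA transA totA] [irrB transB totB]; rewrite /lex_lt; split.
- by move=> x; rewrite (negbTE (irrA _)) (negbTE (irrB _)) andbF.
- move=> x y z /orP [xy | /andP [/eqP exy xy]] /orP [yz | /andP [/eqP eyz yz]].
  + by rewrite (transA _ _ _ xy yz).
  + by rewrite -eyz xy.
  + by rewrite exy yz.
  + by rewrite exy eyz eqxx (transB _ _ _ xy yz) orbT.
- move=> [x1 x2] [y1 y2] /=; have [<- | /eqP x1y1] := eqVneq x1 y1 => xy.
  + have x2y2 : x2 <> y2 by move=> exy; apply: xy; rewrite exy.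
    by case: (totB _ _ x2y2) => ->; [left | right]; rewrite orbT.
  + by case: (totA _ _ x1y1) => ->; [left | right].
Qed.

(* Tags for a disjoint union with fixed summand [B]: [None] marks an element of the varying
   summand, [Some b] stands for [b]. *)
Definition tag_eq V (T : eqType) m (p q : option T) (i j : 'I_m) : form V m :=
  match p, q with
  | None, None => FEq V i j
  | Some b, Some b' => fbool (b == b')
  | _, _ => FFalse
  end.
Arguments tag_eq {V T m}.

Definition tag_lt V (T : Type) (ltT : rel T) (var_first : bool) m (p q : option T) (i j : 'I_m)
    : form V m :=
  match p, q with
  | None, None => FLt V i j
  | None, Some _ => fbool var_first
  | Some _, None => fbool (~~ var_first)
  | Some b, Some b' => fbool (ltT b b')
  end.
Arguments tag_lt {V T} ltT var_first {m}.

Definition var_atom V (T I : finType) m (t : I -> option T * 'I_m) (f : form V m) : form V m :=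
  if [forall k, (t k).1 == None] then f else FFalse.
Arguments var_atom {V T I m}.

Definition fixed_atom V (T I : finType) m (t : I -> option T * 'I_m) (Q : pred {ffun I -> T})
    : form V m :=
  fbool [exists u : {ffun I -> T}, [forall k, (t k).1 == Some (u k)] && Q u].
Arguments fixed_atom {V T I m}.

Definition union_atom V (B : struc V) (var_left : bool) m (s : vsym (union_vocab V)) :
    ('I_(@varity (union_vocab V) s) -> option (dom B) * 'I_m) -> form V m :=
  match s as s return ('I_(@varity (union_vocab V) s) -> option (dom B) * 'I_m) -> form V m with
  | inl s0 => fun t =>
      FOr (var_atom t (@FRel V m s0 (fun k => (t k).2))) (fixed_atom t (interp B s0))
  | inr b => fun t => if b == var_left then var_atom t (fbool true) else fixed_atom t xpredT
  end.
Arguments union_atom {V} B var_left {m} s.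

Section UnionAtoms.
Variables (V : vocab) (M B : struc V) (lt : rel (dom M)) (Z : eqType).
Variables (inM : dom M -> Z) (inB : dom B -> Z).
Hypotheses (inM_inj : injective inM) (inB_inj : injective inB).
Hypothesis inM_neq_inB : forall x b, inM x != inB b.

Local Notation tag p x := (oapp inB (inM x) p).
Local Notation tuple t e := [ffun k => tag (t k).1 (e (t k).2)].

Lemma sat_tag_eq m p q (i j : 'I_m) e :
  sat lt (tag_eq p q i j) e <-> tag p (e i) = tag q (e j).
Proof.
case: p q => [b|] [b'|] /=.
- by apply: iff_trans (sat_fbool _ _ _) _; split=> [/eqP -> | /inB_inj ->].
- by split=> // /eqP; rewrite eq_sym (negbTE (inM_neq_inB _ _)).
- by split=> // /eqP; rewrite (negbTE (inM_neq_inB _ _)).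
- by split=> [-> | /inM_inj].
Qed.

Lemma sat_tag_lt (ltZ : rel Z) (ltB : rel (dom B)) var_first :
  (forall x y, ltZ (inM x) (inM y) = lt x y) ->
  (forall b b', ltZ (inB b) (inB b') = ltB b b') ->
  (forall x b, ltZ (inM x) (inB b) = var_first) ->
  (forall x b, ltZ (inB b) (inM x) = ~~ var_first) ->
  forall m p q (i j : 'I_m) e,
  sat lt (tag_lt ltB var_first p q i j) e <-> ltZ (tag p (e i)) (tag q (e j)).
Proof.
move=> ltMM ltBB ltMB ltBM m [b|] [b'|] i j e /=;
  rewrite ?ltMM ?ltBB ?ltMB ?ltBM //; exact: sat_fbool.
Qed.

Section Tuples.
Variables (I : finType) (m : nat) (t : I -> option (dom B) * 'I_m) (e : 'I_m -> dom M).

Lemma sat_var_atom (f : form V m) (Q : pred {ffun I -> dom M}) :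
  (sat lt f e <-> Q [ffun k => e (t k).2]) ->
  sat lt (var_atom t f) e <->
  [exists u : {ffun I -> dom M}, (tuple t e == [ffun k => inM (u k)]) && Q u].
Proof.
move=> fQ; have -> : [exists u : {ffun I -> dom M}, (tuple t e == [ffun k => inM (u k)]) && Q u]
    = [forall k, (t k).1 == None] && Q [ffun k => e (t k).2].
  apply/existsP/andP => [[u /andP [/eqP /ffunP tu Qu]] | [/forallP tN Qt]].
    have tk k : (t k).1 = None /\ e (t k).2 = u k.
      move: (tu k); rewrite !ffunE; case: (t k).1 => [b /eqP | /inM_inj //].
      by rewrite eq_sym (negbTE (inM_neq_inB _ _)).
    split; first by apply/forallP => k; rewrite (tk k).1.
    by rewrite (_ : [ffun k => _] = u) //; apply/ffunP => k; rewrite ffunE (tk k).2.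
  exists [ffun k => e (t k).2]; rewrite Qt andbT.
  by apply/eqP/ffunP => k; rewrite !ffunE (eqP (tN k)).
rewrite /var_atom; case: ifP => _ /=; last by split=> // -[].
by apply: iff_trans fQ _; split=> // /andP [].
Qed.

Lemma sat_fixed_atom (Q : pred {ffun I -> dom B}) :
  sat lt (fixed_atom t Q) e <->
  [exists u : {ffun I -> dom B}, (tuple t e == [ffun k => inB (u k)]) && Q u].
Proof.
apply: iff_trans (sat_fbool _ _ _) _.
suff -> : [exists u : {ffun I -> dom B}, (tuple t e == [ffun k => inB (u k)]) && Q u]
    = [exists u : {ffun I -> dom B}, [forall k, (t k).1 == Some (u k)] && Q u] by [].
apply: eq_existsb => u; congr (_ && _); apply/eqP/forallP => [/ffunP tu k | tu].
  move: (tu k); rewrite !ffunE; case: (t k).1 => [b /inB_inj -> // | /eqP].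
  by rewrite (negbTE (inM_neq_inB _ _)).
by apply/ffunP => k; rewrite !ffunE (eqP (tu k)).
Qed.

End Tuples.

Lemma sat_union_atom_rel var_left m s0 (t : 'I_(varity s0) -> option (dom B) * 'I_m) e :
  sat lt (union_atom B var_left (inl s0) t) e <->
  [exists u : {ffun 'I_(varity s0) -> dom M}, (tuple t e == [ffun k => inM (u k)]) && interp M s0 u]
  || [exists u : {ffun 'I_(varity s0) -> dom B},
        (tuple t e == [ffun k => inB (u k)]) && interp B s0 u].
Proof.
have var := sat_var_atom (f := @FRel V m s0 (fun k => (t k).2)) (Q := interp M s0) (iff_refl _).
have fixed := sat_fixed_atom t e (interp B s0).
by split=> [[/var | /fixed] -> | /orP [/var | /fixed]]; rewrite ?orbT //; [left | right].
Qed.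

Lemma sat_union_atom_var var_left m (t : 'I_1 -> option (dom B) * 'I_m) e :
  sat lt (union_atom B var_left (inr var_left) t) e <->
  [exists u : {ffun 'I_1 -> dom M}, tuple t e == [ffun k => inM (u k)]].
Proof.
rewrite /= eqxx; apply: iff_trans (sat_var_atom (Q := xpredT) (sat_fbool lt true e)) _.
by under eq_existsb do rewrite andbT.
Qed.

Lemma sat_union_atom_fixed var_left m (t : 'I_1 -> option (dom B) * 'I_m) e :
  sat lt (union_atom B var_left (inr (~~ var_left)) t) e <->
  [exists u : {ffun 'I_1 -> dom B}, tuple t e == [ffun k => inB (u k)]].
Proof.
rewrite /= (_ : (~~ var_left == var_left) = false); last by case: var_left.
apply: iff_trans (sat_fixed_atom t e xpredT) _.
by under eq_existsb do rewrite andbT.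
Qed.

End UnionAtoms.

Lemma qrank_tag_eq V (T : eqType) m (p q : option T) (i j : 'I_m) :
  qrank (@tag_eq V T m p q i j) = 0.
Proof. by case: p q => [?|] [?|]; rewrite /= ?qrank_fbool. Qed.

Lemma qrank_tag_lt V (T : Type) (ltT : rel T) var_first m (p q : option T) (i j : 'I_m) :
  qrank (@tag_lt V T ltT var_first m p q i j) = 0.
Proof. by case: p q => [?|] [?|]; rewrite /= ?qrank_fbool. Qed.

Lemma qrank_union_atom V (B : struc V) var_left m s t : qrank (@union_atom V B var_left m s t) = 0.
Proof.
by case: s t => [s0 | b] t /=; rewrite /var_atom /fixed_atom; do ?case: ifP; rewrite ?qrank_fbool.
Qed.

Lemma same_Th_dunionl V (B : struc V) k (A1 A2 : struc V) :
  same_Th k A1 A2 -> same_Th k (dunion_struc A1 B) (dunion_struc A2 B).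
Proof.
apply: (@same_Th_transfer V (union_vocab V) (option (dom B))
  (fun m => tag_eq) (fun m => tag_lt (@enum_lt _) true)
  (@union_atom V B true) None (fun M => dunion_struc M B)
  (fun M p x => oapp inr (inl x) p) (fun M lt => sum_lt lt (@enum_lt _))).
- by move=> M [x | b]; [exists None, x | exists (Some b), (dom_pt M)].
- by move=> M lt lin; apply: sum_lt_linear lin (enum_lt_linear _).
- by move=> M lt m p q i j e; apply: sat_tag_eq; [exact: inl_inj | exact: inr_inj |].
- by move=> M lt m p q i j e; apply: sat_tag_lt.
- move=> M lt m [s0 | [] ] t e /=.
  + exact (sat_union_atom_rel lt inl_inj inr_inj (fun _ _ => isT) true t e).
  + exact (sat_union_atom_var lt (inB := inr) inl_inj (fun _ _ => isT) true t e).
  + exact (sat_union_atom_fixed lt (inM := inl) inr_inj (fun _ _ => isT) true t e).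
- exact: qrank_tag_eq.
- exact: qrank_tag_lt.
- exact: qrank_union_atom.
Qed.

Lemma same_Th_dunionr V (A : struc V) k (B1 B2 : struc V) :
  same_Th k B1 B2 -> same_Th k (dunion_struc A B1) (dunion_struc A B2).
Proof.
apply: (@same_Th_transfer V (union_vocab V) (option (dom A))
  (fun m => tag_eq) (fun m => tag_lt (@enum_lt _) false)
  (@union_atom V A false) None (fun M => dunion_struc A M)
  (fun M p x => oapp inl (inr x) p) (fun M lt => sum_lt (@enum_lt _) lt)).
- by move=> M [a | x]; [exists (Some a), (dom_pt M) | exists None, x].
- by move=> M lt lin; apply: sum_lt_linear (enum_lt_linear _) lin.
- by move=> M lt m p q i j e; apply: sat_tag_eq; [exact: inr_inj | exact: inl_inj |].
- by move=> M lt m p q i j e; apply: sat_tag_lt.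
- move=> M lt m [s0 | [] ] t e /=.
  + rewrite orbC; exact (sat_union_atom_rel lt inr_inj inl_inj (fun _ _ => isT) false t e).
  + exact (sat_union_atom_fixed lt (inM := inr) inl_inj (fun _ _ => isT) false t e).
  + exact (sat_union_atom_var lt (inB := inl) inr_inj (fun _ _ => isT) false t e).
- exact: qrank_tag_eq.
- exact: qrank_tag_lt.
- exact: qrank_union_atom.
Qed.

Lemma relpre_linear (A B : Type) (f : A -> B) (ltB : rel B) :
  injective f -> linear_order ltB -> linear_order (relpre f ltB).
Proof.
move=> f_inj [irr trans tot]; split=> [x | x y z | x y xy] /=; first exact: irr.
- exact: trans.
- by apply: tot => fxy; apply: xy; apply: f_inj.
Qed.

Definition pair_eq V (T : eqType) m (p q : T) (i j : 'I_m) : form V m :=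
  FAnd (FEq V i j) (fbool (p == q)).

Definition pair_lt V (T : Type) (ltT : rel T) m (p q : T) (i j : 'I_m) : form V m :=
  FOr (FLt V i j) (FAnd (FEq V i j) (fbool (ltT p q))).

Definition prod_atom V (B : struc V) m (s : vsym V) (t : 'I_(varity s) -> dom B * 'I_m)
    : form V m :=
  FAnd (@FRel V m s (fun k => (t k).2)) (fbool (interp B s [ffun k => (t k).1])).

Arguments pair_eq {V T m}.
Arguments pair_lt {V T} ltT {m}.
Arguments prod_atom {V} B {m} s.

Lemma interp_prod_pairs V (A B : struc V) s (f : 'I_(varity s) -> dom A) (g : _ -> dom B) :
  interp (prod_struc A B) s [ffun k => (f k, g k)] =
  interp A s [ffun k => f k] && interp B s [ffun k => g k].
Proof. by rewrite /=; congr (_ && _); congr (interp _ _ _); apply/ffunP => k; rewrite !ffunE. Qed.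

Section ProductAtoms.
Variables (V : vocab) (M B : struc V) (lt : rel (dom M)).

Lemma sat_pair_eq m (b b' : dom B) (i j : 'I_m) e :
  sat lt (pair_eq b b' i j) e <-> (e i, b) = (e j, b').
Proof.
apply: iff_trans (and_iff_compat_l _ (sat_fbool _ _ _)) _.
by split=> [[-> /eqP ->] | [-> ->]].
Qed.

Lemma sat_pair_lt (ltB : rel (dom B)) m (b b' : dom B) (i j : 'I_m) e :
  sat lt (pair_lt ltB b b' i j) e <-> lex_lt lt ltB (e i, b) (e j, b').
Proof.
rewrite /lex_lt /=; split=> [[-> // | [-> /sat_fbool ->]] | /orP [-> | /andP [/eqP ->]]].
- by rewrite eqxx orbT.
- by left.
- by right; split=> //; apply/sat_fbool.
Qed.

Lemma sat_prod_atom m s (t : 'I_(varity s) -> dom B * 'I_m) e :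
  sat lt (prod_atom B s t) e <->
  interp M s [ffun k => e (t k).2] && interp B s [ffun k => (t k).1].
Proof.
apply: iff_trans (and_iff_compat_l _ (sat_fbool _ _ _)) _.
by split=> [[-> ->] | /andP].
Qed.

End ProductAtoms.

Lemma same_Th_prodl V (B : struc V) k (A1 A2 : struc V) :
  same_Th k A1 A2 -> same_Th k (prod_struc A1 B) (prod_struc A2 B).
Proof.
apply: (@same_Th_transfer V V (dom B) (fun m => pair_eq) (fun m => pair_lt (@enum_lt _))
  (fun m => prod_atom B) (dom_pt B) (fun M => prod_struc M B)
  (fun M b x => (x, b)) (fun M lt => lex_lt lt (@enum_lt _))).
- by move=> M [x b]; exists b, x.
- by move=> M lt lin; apply: lex_lt_linear lin (enum_lt_linear _).
- by move=> M lt m b b' i j e; apply: sat_pair_eq.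
- by move=> M lt m b b' i j e; apply: sat_pair_lt.
- by move=> M lt m s t e; rewrite interp_prod_pairs; apply: sat_prod_atom.
all: by move=> *; rewrite /= qrank_fbool.
Qed.

Lemma same_Th_prodr V (A : struc V) k (B1 B2 : struc V) :
  same_Th k B1 B2 -> same_Th k (prod_struc A B1) (prod_struc A B2).
Proof.
apply: (@same_Th_transfer V V (dom A) (fun m => pair_eq) (fun m => pair_lt (@enum_lt _))
  (fun m => prod_atom A) (dom_pt A) (fun M => prod_struc A M)
  (* ordering [A * M] with the varying coordinate major reuses the atoms of [same_Th_prodl] *)
  (fun M a x => (a, x)) (fun M lt => relpre (fun u => (u.2, u.1)) (lex_lt lt (@enum_lt _)))).
- by move=> M [a x]; exists a, x.
- move=> M lt lin; apply: relpre_linear (lex_lt_linear lin (enum_lt_linear _)).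
  by move=> [? ?] [? ?] [-> ->].
- move=> M lt m a a' i j e; apply: iff_trans (sat_pair_eq lt a a' i j e) _.
  by split=> -[-> ->].
- by move=> M lt m a a' i j e; apply: sat_pair_lt.
- by move=> M lt m s t e; rewrite interp_prod_pairs andbC; apply: sat_prod_atom.
all: by move=> *; rewrite /= qrank_fbool.
Qed.

Theorem theorem5p1 (k : nat) (V : vocab) (A1 A2 B1 B2 : struc V) :
  same_Th k A1 A2 -> same_Th k B1 B2 ->
  same_Th k (dunion_struc A1 B1) (dunion_struc A2 B2) /\
  same_Th k (prod_struc A1 B1) (prod_struc A2 B2).
Proof.
move=> A12 B12; split.
- exact: same_Th_trans (same_Th_dunionl B1 A12) (same_Th_dunionr A2 B12).
- exact: same_Th_trans (same_Th_prodl B1 A12) (same_Th_prodr A2 B12).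
Qed.
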